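(* Let $K\ge2$, $1<\theta<\frac32$, $T>0$, and let $\boldsymbol\xi=(\xi_1,\dots,\xi_K)$ be $C^1$ on $[T,\infty)$ satisfying $$\dot\xi_1=-t^{-1}\gamma_1\big(e^{-(\xi_2-\xi_1)}-1\big)+r_1(t),$$ $$\dot\xi_k=t^{-1}\Big(\gamma_{k-1}\big(e^{-(\xi_k-\xi_{k-1})}-1\big)-\gamma_k\big(e^{-(\xi_{k+1}-\xi_k)}-1\big)\Big)+r_k(t),\quad 2\le k\le K-1,$$ $$\dot\xi_K=t^{-1}\gamma_{K-1}\big(e^{-(\xi_K-\xi_{K-1})}-1\big)+r_K(t),$$ where $\gamma_k=\frac{k(K-k)}{2}$ and $|r_k(t)|\le Ct^{-\theta}$, and assume $\big|\sum_{k=1}^K\xi_k(t)\big|\le Ct^{-\theta+1}$ for all $t\ge T$. Then $\xi_k(t)=O(t^{-\theta+1})$ as $t\to\infty$ for every $k=1,\dots,K$. *)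

From Stdlib Require Import Reals Lra.
Open Scope R_scope.

(* gamma_k = k (K - k) / 2  (used for 1 <= k <= K-1, so nat subtraction is exact) *)
Definition gam (K k : nat) : R := INR (k * (K - k)) / 2.

(* Right-hand side of the ODE system (without the remainder r_k), for
   indices 1 <= k <= K.  xi : nat -> R -> R, components indexed 1..K. *)
Definition ode_rhs (K : nat) (xi : nat -> R -> R) (k : nat) (t : R) : R :=
  if Nat.eqb k 1 then
    - / t * (gam K 1 * (exp (- (xi 2%nat t - xi 1%nat t)) - 1))
  else if Nat.eqb k K then
    / t * (gam K (K - 1) * (exp (- (xi K t - xi (K - 1)%nat t)) - 1))
  else
    / t * (gam K (k - 1) * (exp (- (xi k t - xi (k - 1)%nat t)) - 1)
           - gam K k * (exp (- (xi (S k) t - xi k t)) - 1)).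

Definition xsum (K : nat) (xi : nat -> R -> R) (t : R) : R :=
  sum_f_R0 (fun j => xi (S j) t) (K - 1).

From Stdlib Require Import Reals Lra Lia Psatz.
From Coquelicot Require Import Coquelicot.
Open Scope R_scope.

(* Write u_j = xi_(j+1) - xi_j for the gaps and F_j = gam_j (e^(-u_j) - 1), so that
   F_0 = F_K = 0 and xi_k' = (F_(k-1) - F_k) / t + r_k.  The energy
   V = sum_j gam_j (e^(-u_j) + u_j - 1) then satisfies, by summation by parts, a discrete
   Hardy inequality (the weights gam_j have second difference -1) and Young's inequality,
     V' <= - (1 / 2t) sum_j gam_j (e^(-u_j) - 1)^2 + O(t^(1 - 2 theta)).
   As 2 theta - 1 > 1, V stays bounded, so the gaps are bounded above by some U, and the
   Lojasiewicz-type bound sum_j gam_j (e^(-u_j) - 1)^2 >= 2 e^(-2U) V gives a power decay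
   of V.  Hence eventually every u_j <= delta = (3 - 2 theta) / 4, which improves the
   damping rate to e^(-2 delta) > 2 theta - 2 (this is where theta < 3/2 is used) and
   yields V = O(t^(2 - 2 theta)), i.e. u_j = O(t^(1 - theta)).  Finally the xi_k are
   recovered from their gaps and the bound on their sum. *)

Lemma le_of_derive_nonneg (f f' : R -> R) a b : a <= b ->
  (forall c, a <= c <= b -> derivable_pt_lim f c (f' c)) ->
  (forall c, a <= c <= b -> 0 <= f' c) -> f a <= f b.
Proof.
  intros Hab Hd Hp. destruct (Rle_lt_or_eq_dec _ _ Hab) as [Hlt|<-]; [|lra].
  destruct (MVT_cor2 f f' a b Hlt Hd) as [c [Hc Hfc]].
  assert (0 <= f' c) by (apply Hp; lra). nra.
Qed.

Lemma exp_le a b : a <= b -> exp a <= exp b.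
Proof. intros [Hlt | ->]; [left; apply exp_increasing|]; lra. Qed.

Lemma Rpower_gt0 s b : 0 < Rpower s b.
Proof. apply exp_pos. Qed.

Definition lyap (u : R) : R := exp (- u) + u - 1.
Definition dissip (u : R) : R := (exp (- u) - 1) ^ 2.

Lemma lyap_derive u : derivable_pt_lim lyap u (1 - exp (- u)).
Proof. apply is_derive_Reals. unfold lyap. auto_derive; [exact I|]. ring. Qed.

Lemma lyap_ge_lin u : u - 1 <= lyap u.
Proof. unfold lyap. pose proof (exp_pos (- u)). lra. Qed.

Lemma lyap_ge0 u : 0 <= lyap u.
Proof. unfold lyap. pose proof (exp_ineq1_le (- u)). lra. Qed.

Lemma lyap_le_mono a b : 0 <= a <= b -> lyap a <= lyap b.
Proof.
  intros [Ha Hab]. apply (le_of_derive_nonneg lyap (fun s => 1 - exp (- s))); auto.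
  - intros c _. apply lyap_derive.
  - intros c Hc. pose proof (exp_le (- c) 0 ltac:(lra)) as Hexp. rewrite exp_0 in Hexp. lra.
Qed.

Lemma lyap_le_sq u : 0 <= u -> lyap u <= u ^ 2 / 2.
Proof.
  intros Hu.
  assert (Hmono : 0 ^ 2 / 2 - lyap 0 <= u ^ 2 / 2 - lyap u).
  { apply (le_of_derive_nonneg (fun s => s ^ 2 / 2 - lyap s) (fun s => s + exp (- s) - 1));
      [lra| |].
    - intros c _. apply is_derive_Reals. unfold lyap. auto_derive; [exact I|]. field.
    - intros c _. pose proof (exp_ineq1_le (- c)). lra. }
  unfold lyap in Hmono |- *. rewrite Ropp_0, exp_0 in Hmono. lra.
Qed.

Lemma lyap_ge_sq_exp u : 0 <= u -> u ^ 2 * exp (- u) / 2 <= lyap u.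
Proof.
  intros Hu.
  assert (Hmono : 1 + 0 * exp 0 - exp 0 - 0 ^ 2 / 2 <= 1 + u * exp u - exp u - u ^ 2 / 2).
  { apply (le_of_derive_nonneg (fun s => 1 + s * exp s - exp s - s ^ 2 / 2)
             (fun s => s * (exp s - 1))); [lra| |].
    - intros c _. apply is_derive_Reals. auto_derive; [exact I|]. field.
    - intros c Hc. pose proof (exp_ineq1_le c). nra. }
  rewrite exp_0 in Hmono.
  assert (Hinv : exp u * exp (- u) = 1) by (rewrite <- exp_plus, Rplus_opp_r; apply exp_0).
  pose proof (exp_pos (- u)). unfold lyap. nra.
Qed.

Lemma lyap_ge_sq u : u <= 1 / 2 -> u ^ 2 / 4 <= lyap u.
Proof.
  intros Hu. destruct (Rle_lt_dec u 0) as [Hneg|Hpos].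
  - pose proof (exp_ge_taylor (- u) 2 ltac:(lra)) as Htaylor.
    simpl in Htaylor. unfold lyap. nra.
  - pose proof (lyap_ge_sq_exp u ltac:(lra)). pose proof (exp_ineq1_le (- u)). nra.
Qed.

Lemma dissip_ge_lyap_nonpos u : u <= 0 -> 2 * lyap u <= dissip u.
Proof.
  intros Hu.
  assert (Hmono : (exp 0 - 1) ^ 2 - 2 * (exp 0 - 0 - 1)
              <= (exp (- u) - 1) ^ 2 - 2 * (exp (- u) - (- u) - 1)).
  { apply (le_of_derive_nonneg (fun s => (exp s - 1) ^ 2 - 2 * (exp s - s - 1))
             (fun s => 2 * (exp s - 1) ^ 2)); [lra| |].
    - intros c _. apply is_derive_Reals. auto_derive; [exact I|]. field.
    - intros c _. pose proof (pow2_ge_0 (exp c - 1)). lra. }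
  rewrite exp_0 in Hmono. unfold lyap, dissip. lra.
Qed.

Lemma dissip_ge_sq u U : 0 <= u <= U -> u ^ 2 * exp (- (2 * U)) <= dissip u.
Proof.
  intros [Hu HuU].
  assert (Hinv : exp u * exp (- u) = 1) by (rewrite <- exp_plus, Rplus_opp_r; apply exp_0).
  assert (Hgap : u * exp (- u) <= 1 - exp (- u)).
  { pose proof (exp_ineq1_le u). pose proof (exp_pos (- u)). nra. }
  pose proof (exp_le (- U) (- u) ltac:(lra)). pose proof (exp_pos (- U)).
  replace (- (2 * U)) with (- U + - U) by ring. rewrite exp_plus.
  assert (0 <= u * exp (- U) <= 1 - exp (- u)) by nra.
  unfold dissip. nra.
Qed.

Lemma dissip_ge_lyap u U : 0 <= U -> u <= U -> 2 * exp (- (2 * U)) * lyap u <= dissip u.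
Proof.
  intros HU Hu. pose proof (lyap_ge0 u).
  pose proof (exp_le (- (2 * U)) 0 ltac:(lra)) as Hexp. rewrite exp_0 in Hexp.
  pose proof (exp_pos (- (2 * U))).
  destruct (Rle_lt_dec u 0) as [Hneg|Hpos].
  - pose proof (dissip_ge_lyap_nonpos u Hneg). nra.
  - pose proof (dissip_ge_sq u U ltac:(lra)). pose proof (lyap_le_sq u ltac:(lra)). nra.
Qed.

Lemma sum_f_R0_by_parts (a f : nat -> R) n :
  sum_f_R0 (fun k => f (S k) * (a (S (S k)) - a (S k))) n
  + sum_f_R0 (fun k => a (S k) * (f (S k) - f k)) (S n)
  = a (S (S n)) * f (S (S n)) - a 1%nat * f 0%nat.
Proof.
  induction n as [|n IH]; [simpl; ring|].
  rewrite tech5, (tech5 _ (S n)). lra.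
Qed.

Lemma sum_f_R0_term_le (f : nat -> R) n k :
  (forall j, 0 <= f j) -> (k <= n)%nat -> f k <= sum_f_R0 f n.
Proof.
  intros Hf Hk. induction n as [|n IH].
  - replace k with 0%nat by lia. simpl. lra.
  - simpl. pose proof (Hf (S n)). destruct (Nat.eq_dec k (S n)) as [->|Hne].
    + pose proof (cond_pos_sum f n Hf). lra.
    + pose proof (IH ltac:(lia)). lra.
Qed.

Lemma sq_diff_ge_weighted (x y p q : R) : 0 < p -> 0 < q ->
  y ^ 2 * (1 - p / q) + x ^ 2 * (1 - q / p) <= (y - x) ^ 2.
Proof.
  intros Hp Hq.
  assert (E : (y - x) ^ 2 - (y ^ 2 * (1 - p / q) + x ^ 2 * (1 - q / p))
              = (y * p - x * q) ^ 2 / (p * q)) by (field; lra).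
  assert (0 <= (y * p - x * q) ^ 2 / (p * q)).
  { apply Rmult_le_pos; [apply pow2_ge_0|]. left. apply Rinv_0_lt_compat. nra. }
  lra.
Qed.

Lemma discrete_hardy (w f : nat -> R) n :
  0 <= w 0%nat -> 0 <= w (S (S n)) -> (forall j, (1 <= j <= S n)%nat -> 0 < w j) ->
  f 0%nat = 0 -> f (S (S n)) = 0 ->
  sum_f_R0 (fun k => f (S k) ^ 2 * (2 * w (S k) - w k - w (S (S k))) / w (S k)) n
  <= sum_f_R0 (fun j => (f (S j) - f j) ^ 2) (S n).
Proof.
  intros Hw0 HwN Hw Hf0 HfN.
  set (P := fun j => f (S j) ^ 2 * (1 - w j / w (S j))).
  set (Q := fun j => f j ^ 2 * (1 - w (S j) / w j)).
  assert (Hterm : forall j, (j <= S n)%nat -> P j + Q j <= (f (S j) - f j) ^ 2).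
  { intros j Hj. unfold P, Q. destruct j as [|j].
    - rewrite Hf0. pose proof (Hw 1%nat ltac:(lia)).
      assert (0 <= w 0%nat / w 1%nat) by (apply Rdiv_le_0_compat; lra).
      pose proof (pow2_ge_0 (f 1%nat)). nra.
    - destruct (Nat.eq_dec j n) as [->|Hne].
      + rewrite HfN. pose proof (Hw (S n) ltac:(lia)).
        assert (0 <= w (S (S n)) / w (S n)) by (apply Rdiv_le_0_compat; lra).
        pose proof (pow2_ge_0 (f (S n))). nra.
      + apply sq_diff_ge_weighted; apply Hw; lia. }
  assert (Hsum : sum_f_R0 (fun j => P j + Q j) (S n) =
     sum_f_R0 (fun k => f (S k) ^ 2 * (2 * w (S k) - w k - w (S (S k))) / w (S k)) n).
  { rewrite sum_plus, tech5, (decomp_sum Q (S n)) by lia. simpl pred.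
    assert (P (S n) = 0) by (unfold P; rewrite HfN; ring).
    assert (Q 0%nat = 0) by (unfold Q; rewrite Hf0; ring).
    transitivity (sum_f_R0 (fun k => P k + Q (S k)) n); [rewrite sum_plus; lra|].
    apply sum_eq. intros k Hk. unfold P, Q.
    pose proof (Hw (S k) ltac:(lia)). field. lra. }
  rewrite <- Hsum. apply sum_Rle. exact Hterm.
Qed.

Lemma abs_le_of_gaps_and_sum (x : nat -> R) m e s : 0 <= e ->
  (forall j, (j < m)%nat -> Rabs (x (S (S j)) - x (S j)) <= e) ->
  Rabs (sum_f_R0 (fun j => x (S j)) m) <= s ->
  forall k, (1 <= k <= S m)%nat -> Rabs (x k) <= s + 2 * INR m * e.
Proof.
  intros He Hgap Hsum k Hk.
  assert (Hchain : forall j, (j <= m)%nat -> Rabs (x (S j) - x 1%nat) <= INR m * e).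
  { intros j Hj. apply Rle_trans with (INR j * e).
    - induction j as [|j IH].
      + simpl. rewrite Rminus_diag, Rabs_R0. lra.
      + replace (x (S (S j)) - x 1%nat) with ((x (S (S j)) - x (S j)) + (x (S j) - x 1%nat))
          by ring.
        eapply Rle_trans; [apply Rabs_triang|]. rewrite S_INR.
        pose proof (Hgap j ltac:(lia)). pose proof (IH ltac:(lia)). lra.
    - apply Rmult_le_compat_r; [lra|]. apply le_INR; lia. }
  assert (Hspread : Rabs (sum_f_R0 (fun j => x (S j) - x 1%nat) m) <= INR (S m) * (INR m * e)).
  { eapply Rle_trans; [apply sum_f_R0_triangle|].
    eapply Rle_trans; [apply (sum_Rle _ (fun _ => INR m * e)); exact Hchain|].
    rewrite sum_cte. lra. }
  assert (Hsplit : sum_f_R0 (fun j => x (S j)) m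
                   = INR (S m) * x 1%nat + sum_f_R0 (fun j => x (S j) - x 1%nat) m).
  { rewrite minus_sum, sum_cte. ring. }
  assert (Hx1 : Rabs (x 1%nat) <= s + INR m * e).
  { assert (HSm : 1 <= INR (S m)) by (rewrite S_INR; pose proof (pos_INR m); lra).
    assert (INR (S m) * Rabs (x 1%nat) <= s + INR (S m) * (INR m * e)).
    { replace (INR (S m) * Rabs (x 1%nat)) with (Rabs (INR (S m) * x 1%nat))
        by (rewrite Rabs_mult, (Rabs_right (INR (S m))); lra).
      replace (INR (S m) * x 1%nat) with
        (sum_f_R0 (fun j => x (S j)) m - sum_f_R0 (fun j => x (S j) - x 1%nat) m) by lra.
      eapply Rle_trans; [apply Rabs_triang|]. rewrite Rabs_Ropp. lra. }
    pose proof (Rabs_pos (sum_f_R0 (fun j => x (S j)) m)). pose proof (Rabs_pos (x 1%nat)). nra. }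
  destruct k as [|j]; [lia|].
  replace (x (S j)) with ((x (S j) - x 1%nat) + x 1%nat) by ring.
  eapply Rle_trans; [apply Rabs_triang|]. pose proof (Hchain j ltac:(lia)). lra.
Qed.

Lemma Rpower_pred s b : 0 < s -> Rpower s (b - 1) = Rpower s b * / s.
Proof. intros Hs. unfold Rminus. rewrite Rpower_plus, Rpower_Ropp, Rpower_1; auto. Qed.

(* [t^b] is an integrating factor. *)
Lemma diff_ineq_integrated (V V' : R -> R) t0 b p B : 0 < t0 -> b - p + 1 <> 0 ->
  (forall t, t0 <= t -> derivable_pt_lim V t (V' t)) ->
  (forall t, t0 <= t -> V' t <= - (b / t) * V t + B * Rpower t (- p)) ->
  forall t, t0 <= t ->
  Rpower t b * V t - B / (b - p + 1) * Rpower t (b - p + 1)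
  <= Rpower t0 b * V t0 - B / (b - p + 1) * Rpower t0 (b - p + 1).
Proof.
  intros Ht0 Hq Hd Hi t Ht. set (q := b - p + 1) in *.
  enough (- (Rpower t0 b * V t0 - B / q * Rpower t0 q) <= - (Rpower t b * V t - B / q * Rpower t q))
    by lra.
  apply (le_of_derive_nonneg (fun s => - (Rpower s b * V s - B / q * Rpower s q))
    (fun s => - (b * Rpower s (b - 1) * V s + Rpower s b * V' s
                 - B / q * (q * Rpower s (q - 1))))); auto.
  - intros c Hc.
    apply (derivable_pt_lim_opp (fun s => Rpower s b * V s - B / q * Rpower s q)).
    apply (derivable_pt_lim_minus (fun s => Rpower s b * V s) (fun s => B / q * Rpower s q)).
    + apply (derivable_pt_lim_mult (fun s => Rpower s b) V).
      * apply derivable_pt_lim_power; lra.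
      * apply Hd; lra.
    + apply (derivable_pt_lim_scal (fun s => Rpower s q)). apply derivable_pt_lim_power; lra.
  - intros c Hc. assert (Hc0 : 0 < c) by lra.
    assert (E : B / q * (q * Rpower c (q - 1)) = B * Rpower c b * Rpower c (- p)).
    { replace (q - 1) with (b + - p) by (unfold q; ring). rewrite Rpower_plus. field. auto. }
    rewrite E, Rpower_pred by auto.
    pose proof (Hi c ltac:(lra)). pose proof (Rpower_gt0 c b).
    assert (Rpower c b * V' c <= Rpower c b * (- (b / c) * V c + B * Rpower c (- p)))
      by (apply Rmult_le_compat_l; lra).
    assert (Rpower c b * (- (b / c) * V c + B * Rpower c (- p))
            = - (b * (Rpower c b * / c) * V c) + B * Rpower c b * Rpower c (- p)) by (field; lra).
    lra.
Qed.

Lemma diff_ineq_damping_rate (V V' : R -> R) t0 b p B : 0 < t0 -> b < p - 1 -> 0 <= B ->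
  (forall t, t0 <= t -> derivable_pt_lim V t (V' t)) ->
  (forall t, t0 <= t -> V' t <= - (b / t) * V t + B * Rpower t (- p)) ->
  exists A, forall t, t0 <= t -> V t <= A * Rpower t (- b).
Proof.
  intros Ht0 Hb HB Hd Hi.
  set (A := Rpower t0 b * V t0 - B / (b - p + 1) * Rpower t0 (b - p + 1)).
  exists A. intros t Ht.
  pose proof (diff_ineq_integrated V V' t0 b p B Ht0 ltac:(lra) Hd Hi t Ht) as Hmono.
  fold A in Hmono.
  assert (B / (b - p + 1) <= 0).
  { apply Rmult_le_0_l; [lra|]. left. apply Rinv_lt_0_compat. lra. }
  pose proof (Rpower_gt0 t (b - p + 1)). pose proof (Rpower_gt0 t b).
  assert (Rpower t b * V t <= A) by nra.
  rewrite Rpower_Ropp. apply Rmult_le_reg_l with (Rpower t b); auto.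
  replace (Rpower t b * (A * / Rpower t b)) with A by (field; lra). lra.
Qed.

Lemma diff_ineq_forcing_rate (V V' : R -> R) t0 b p B : 0 < t0 -> p - 1 < b -> 0 <= B ->
  (forall t, t0 <= t -> derivable_pt_lim V t (V' t)) ->
  (forall t, t0 <= t -> V' t <= - (b / t) * V t + B * Rpower t (- p)) ->
  exists A, forall t, t0 <= t -> V t <= A * Rpower t (1 - p).
Proof.
  intros Ht0 Hb HB Hd Hi.
  set (q := b - p + 1). assert (Hq : 0 < q) by (unfold q; lra).
  set (A := Rpower t0 b * V t0 - B / q * Rpower t0 q).
  exists (Rmax A 0 * Rpower t0 (- q) + B / q). intros t Ht.
  pose proof (diff_ineq_integrated V V' t0 b p B Ht0 ltac:(lra) Hd Hi t Ht) as Hmono.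
  fold q A in Hmono.
  assert (Eb : Rpower t (- b) = Rpower t (1 - p) * Rpower t (- q)).
  { rewrite <- Rpower_plus. f_equal. unfold q. ring. }
  assert (Eq : Rpower t q * Rpower t (- b) = Rpower t (1 - p)).
  { rewrite <- Rpower_plus. f_equal. unfold q. ring. }
  assert (EV : V t = (Rpower t b * V t) * Rpower t (- b)).
  { rewrite Rpower_Ropp. pose proof (Rpower_gt0 t b). field. lra. }
  assert (Hdecr : Rpower t (- q) <= Rpower t0 (- q)).
  { rewrite !Rpower_Ropp. apply Rinv_le_contravar; [apply Rpower_gt0|].
    apply Rle_Rpower_l; lra. }
  pose proof (Rpower_gt0 t (- b)). pose proof (Rpower_gt0 t (1 - p)).
  pose proof (Rpower_gt0 t (- q)). pose proof (Rmax_l A 0). pose proof (Rmax_r A 0).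
  assert (V t <= A * Rpower t (- b) + B / q * Rpower t (1 - p)).
  { rewrite EV, <- Eq. apply Rle_trans with ((A + B / q * Rpower t q) * Rpower t (- b)).
    - apply Rmult_le_compat_r; lra.
    - lra. }
  assert (A * Rpower t (- b) <= Rmax A 0 * Rpower t0 (- q) * Rpower t (1 - p)).
  { rewrite Eb. apply Rle_trans with (Rmax A 0 * (Rpower t (1 - p) * Rpower t (- q))).
    - apply Rmult_le_compat_r; nra.
    - rewrite (Rmult_comm (Rpower t (1 - p))), <- Rmult_assoc.
      apply Rmult_le_compat_r; [lra|]. apply Rmult_le_compat_l; lra. }
  lra.
Qed.

Lemma Rpower_neg_eventually_le A b eps t0 : 0 < t0 -> 0 < b -> 0 < eps ->
  exists t1, t0 <= t1 /\ forall t, t1 <= t -> A * Rpower t (- b) <= eps.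
Proof.
  intros Ht0 Hb He. destruct (Rle_lt_dec A 0) as [HA|HA].
  - exists t0. split; [lra|]. intros t Ht. pose proof (Rpower_gt0 t (- b)). nra.
  - exists (Rmax t0 (Rpower (A / eps) (/ b))). split; [apply Rmax_l|]. intros t Ht.
    pose proof (Rmax_l t0 (Rpower (A / eps) (/ b))) as Ht0_le.
    pose proof (Rmax_r t0 (Rpower (A / eps) (/ b))) as Hroot_le.
    assert (Hge : A / eps <= Rpower t b).
    { replace (A / eps) with (Rpower (Rpower (A / eps) (/ b)) b).
      - apply Rle_Rpower_l; [lra|]. split; [apply Rpower_gt0|lra].
      - rewrite Rpower_mult, Rinv_l, Rpower_1; [reflexivity| |lra].
        apply Rdiv_lt_0_compat; lra. }
    pose proof (Rpower_gt0 t b). rewrite Rpower_Ropp.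
    apply Rmult_le_reg_r with (Rpower t b); auto.
    replace (A * / Rpower t b * Rpower t b) with A by (field; lra).
    apply Rmult_le_reg_r with (/ eps); [apply Rinv_0_lt_compat; auto|].
    replace (eps * Rpower t b * / eps) with (Rpower t b) by (field; lra). exact Hge.
Qed.

Lemma gam_ge0 K j : 0 <= gam K j.
Proof. unfold gam. pose proof (pos_INR (j * (K - j))). lra. Qed.

Lemma gam_0 K : gam K 0 = 0.
Proof. unfold gam. simpl. lra. Qed.

Lemma gam_diag K : gam K K = 0.
Proof. unfold gam. rewrite Nat.sub_diag, Nat.mul_0_r. simpl. lra. Qed.

Lemma gam_ge_half K j : (1 <= j < K)%nat -> 1 / 2 <= gam K j.
Proof.
  intros Hj. unfold gam. assert (Hpos : (1 <= j * (K - j))%nat) by nia.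
  apply le_INR in Hpos. simpl in Hpos. lra.
Qed.

Lemma gam_second_diff K k : (S (S k) <= K)%nat ->
  2 * gam K (S k) - gam K k - gam K (S (S k)) = 1.
Proof.
  intros Hk. unfold gam. rewrite !mult_INR, !minus_INR by lia. rewrite !S_INR. field.
Qed.

Lemma amgm_absorb (d x t : R) : 0 < t ->
  - d ^ 2 / t + x * d <= - (1 / (2 * t)) * d ^ 2 + t * x ^ 2 / 2.
Proof.
  intros Ht.
  assert (E : - (1 / (2 * t)) * d ^ 2 + t * x ^ 2 / 2 - (- d ^ 2 / t + x * d)
              = (d - t * x) ^ 2 / (2 * t)) by (field; lra).
  assert (0 <= (d - t * x) ^ 2 / (2 * t)).
  { apply Rmult_le_pos; [apply pow2_ge_0|]. left. apply Rinv_0_lt_compat. lra. }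
  lra.
Qed.

Section Energy.

Variables (n : nat) (theta T C : R) (xi r : nat -> R -> R).
Local Notation K := (S (S n)).

Definition gap (j : nat) (t : R) : R := xi (S j) t - xi j t.

Definition flux (j : nat) (t : R) : R := gam K j * (exp (- gap j t) - 1).

Definition energy (t : R) : R :=
  sum_f_R0 (fun k => gam K (S k) * lyap (gap (S k) t)) n.

Definition dissipation (t : R) : R :=
  sum_f_R0 (fun k => gam K (S k) * dissip (gap (S k) t)) n.

Definition energy_dot (t : R) : R :=
  sum_f_R0 (fun j => - (flux (S j) t - flux j t) ^ 2 / t
                     + r (S j) t * (flux (S j) t - flux j t)) (S n).

Lemma flux_0 t : flux 0 t = 0.
Proof. unfold flux. rewrite gam_0. ring. Qed.

Lemma flux_last t : flux K t = 0.
Proof. unfold flux. rewrite gam_diag. ring. Qed.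

Lemma ode_rhs_flux k t : (1 <= k <= K)%nat ->
  ode_rhs K xi k t = / t * (flux (k - 1) t - flux k t).
Proof.
  intros Hk. unfold ode_rhs, flux, gap.
  destruct (Nat.eqb_spec k 1) as [->|_]; [simpl; rewrite gam_0; ring|].
  destruct (Nat.eqb_spec k K) as [->|_].
  - rewrite gam_diag. replace (K - 1)%nat with (S n) by lia. ring.
  - destruct k as [|k]; [lia|]. replace (S k - 1)%nat with k by lia. ring.
Qed.

Lemma energy_dot_by_parts t : 0 < t ->
  sum_f_R0 (fun k => - flux (S k) t * ((ode_rhs K xi (S (S k)) t + r (S (S k)) t)
                                        - (ode_rhs K xi (S k) t + r (S k) t))) n
  = energy_dot t.
Proof.
  intros Ht.
  pose proof (sum_f_R0_by_parts (fun j => ode_rhs K xi j t + r j t) (fun j => flux j t) n) as Hparts.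
  cbv beta in Hparts. rewrite flux_0, flux_last, !Rmult_0_r, Rminus_0_r in Hparts.
  transitivity (-1 * sum_f_R0 (fun k => flux (S k) t * ((ode_rhs K xi (S (S k)) t + r (S (S k)) t)
                                        - (ode_rhs K xi (S k) t + r (S k) t))) n).
  { rewrite scal_sum. apply sum_eq. intros k _. ring. }
  unfold energy_dot.
  replace (sum_f_R0 _ (S n)) with
    (sum_f_R0 (fun k => (ode_rhs K xi (S k) t + r (S k) t) * (flux (S k) t - flux k t)) (S n)).
  { lra. }
  apply sum_eq. intros j Hj. rewrite ode_rhs_flux by lia.
  replace (S j - 1)%nat with j by lia. field. lra.
Qed.

Lemma dissipation_le_flux_diff t :
  dissipation t <= sum_f_R0 (fun j => (flux (S j) t - flux j t) ^ 2) (S n).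
Proof.
  eapply Rle_trans; [|apply (discrete_hardy (gam K) (fun j => flux j t))].
  - right. unfold dissipation. apply sum_eq. intros k Hk.
    rewrite gam_second_diff by lia. pose proof (gam_ge_half K (S k) ltac:(lia)).
    unfold flux, dissip. field. lra.
  - apply gam_ge0.
  - apply gam_ge0.
  - intros j Hj. pose proof (gam_ge_half K j ltac:(lia)). lra.
  - apply flux_0.
  - apply flux_last.
Qed.

Lemma energy_ge0 t : 0 <= energy t.
Proof.
  apply cond_pos_sum. intros k. apply Rmult_le_pos; [apply gam_ge0|apply lyap_ge0].
Qed.

Lemma dissipation_ge0 t : 0 <= dissipation t.
Proof.
  apply cond_pos_sum. intros k. apply Rmult_le_pos; [apply gam_ge0|apply pow2_ge_0].
Qed.

Lemma lyap_gap_le_energy t k : (k <= n)%nat -> lyap (gap (S k) t) <= 2 * energy t.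
Proof.
  intros Hk.
  pose proof (sum_f_R0_term_le (fun k => gam K (S k) * lyap (gap (S k) t)) n k) as Hterm.
  pose proof (gam_ge_half K (S k) ltac:(lia)). pose proof (lyap_ge0 (gap (S k) t)).
  unfold energy. cbv beta in Hterm.
  assert (gam K (S k) * lyap (gap (S k) t) <= sum_f_R0 (fun k => gam K (S k) * lyap (gap (S k) t)) n).
  { apply Hterm; [|lia]. intros j. apply Rmult_le_pos; [apply gam_ge0|apply lyap_ge0]. }
  nra.
Qed.

Lemma gap_le_of_energy_le t A k : (k <= n)%nat -> energy t <= A -> gap (S k) t <= 1 + 2 * A.
Proof.
  intros Hk HA. pose proof (lyap_gap_le_energy t k Hk). pose proof (lyap_ge_lin (gap (S k) t)).
  lra.
Qed.

Lemma gap_le_of_energy_lt t delta k : (k <= n)%nat -> 0 < delta <= 1 / 2 ->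
  energy t < delta ^ 2 / 8 -> gap (S k) t <= delta.
Proof.
  intros Hk Hdelta HE. destruct (Rle_lt_dec (gap (S k) t) delta) as [|Hlt]; [assumption|].
  pose proof (lyap_gap_le_energy t k Hk).
  pose proof (lyap_le_mono delta (gap (S k) t) ltac:(lra)).
  pose proof (lyap_ge_sq delta ltac:(lra)). lra.
Qed.

Lemma gap_sq_le_energy t k : (k <= n)%nat -> gap (S k) t <= 1 / 2 ->
  gap (S k) t ^ 2 <= 8 * energy t.
Proof.
  intros Hk Hgap. pose proof (lyap_gap_le_energy t k Hk). pose proof (lyap_ge_sq _ Hgap). lra.
Qed.

Lemma dissipation_ge_energy t U : 0 <= U ->
  (forall k, (k <= n)%nat -> gap (S k) t <= U) ->
  2 * exp (- (2 * U)) * energy t <= dissipation t.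
Proof.
  intros HU Hgap. unfold energy, dissipation. rewrite scal_sum. apply sum_Rle. intros k Hk.
  pose proof (dissip_ge_lyap _ U HU (Hgap k Hk)). pose proof (gam_ge0 K (S k)).
  replace (gam K (S k) * lyap (gap (S k) t) * (2 * exp (- (2 * U))))
    with (gam K (S k) * (2 * exp (- (2 * U)) * lyap (gap (S k) t))) by ring.
  apply Rmult_le_compat_l; lra.
Qed.

Hypothesis HT : 0 < T.
Hypothesis Hode : forall (k : nat) (t : R), (1 <= k <= K)%nat -> T <= t ->
  derivable_pt_lim (xi k) t (ode_rhs K xi k t + r k t).
Hypothesis Hr : forall (k : nat) (t : R), (1 <= k <= K)%nat -> T <= t ->
  Rabs (r k t) <= C * Rpower t (- theta).

Lemma energy_derive t : T <= t -> derivable_pt_lim energy t (energy_dot t).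
Proof.
  intros Ht. rewrite <- energy_dot_by_parts by lra. apply is_derive_Reals.
  unfold energy. rewrite <- sum_n_Reals.
  apply (is_derive_ext (fun s => sum_n (fun k => gam K (S k) * lyap (gap (S k) s)) n)).
  { intros s. apply sum_n_Reals. }
  apply (is_derive_sum_n (fun k s => gam K (S k) * lyap (gap (S k) s))).
  intros k Hk.
  evar (d : R). replace (- flux (S k) t * _) with d; unfold d.
  - apply is_derive_scal. apply (is_derive_comp lyap (gap (S k))).
    + apply is_derive_Reals, lyap_derive.
    + apply (is_derive_minus (xi (S (S k))) (xi (S k))); apply is_derive_Reals, Hode; lia || lra.
  - unfold flux, gap, scal, minus, plus, opp. simpl. unfold Hierarchy.mult. simpl. ring.
Qed.

Lemma energy_dot_le t : T <= t ->
  energy_dot t <= - (1 / (2 * t)) * dissipation t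
                  + INR K * C ^ 2 / 2 * Rpower t (- (2 * theta - 1)).
Proof.
  intros Ht. assert (Ht0 : 0 < t) by lra.
  assert (Hforce : t * (C * Rpower t (- theta)) ^ 2 = C ^ 2 * Rpower t (- (2 * theta - 1))).
  { replace (- (2 * theta - 1)) with (1 + - theta + - theta) by ring.
    rewrite !Rpower_plus, Rpower_1 by lra. ring. }
  apply Rle_trans with (sum_f_R0 (fun j => (flux (S j) t - flux j t) ^ 2 * - (1 / (2 * t))
                        + C ^ 2 / 2 * Rpower t (- (2 * theta - 1))) (S n)).
  - apply sum_Rle. intros j Hj.
    eapply Rle_trans; [apply amgm_absorb; exact Ht0|].
    assert (Hrj : r (S j) t ^ 2 <= (C * Rpower t (- theta)) ^ 2).
    { rewrite <- (pow2_abs (r (S j) t)). pose proof (Hr (S j) t ltac:(lia) Ht).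
      pose proof (Rabs_pos (r (S j) t)). nra. }
    nra.
  - rewrite sum_plus, sum_cte, <- scal_sum.
    pose proof (dissipation_le_flux_diff t). assert (0 < 1 / (2 * t)) by (apply Rdiv_lt_0_compat; lra).
    nra.
Qed.

Hypothesis Htheta1 : 1 < theta.
Hypothesis Htheta2 : theta < 3 / 2.

Lemma energy_diff_ineq U t : 0 <= U -> T <= t ->
  (forall k, (k <= n)%nat -> gap (S k) t <= U) ->
  energy_dot t <= - (exp (- (2 * U)) / t) * energy t
                  + INR K * C ^ 2 / 2 * Rpower t (- (2 * theta - 1)).
Proof.
  intros HU Ht Hgap. pose proof (energy_dot_le t Ht).
  pose proof (dissipation_ge_energy t U HU Hgap).
  assert (0 < 1 / (2 * t)) by (apply Rdiv_lt_0_compat; lra).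
  assert (- (exp (- (2 * U)) / t) * energy t
          = - (1 / (2 * t)) * (2 * exp (- (2 * U)) * energy t)) by (field; lra).
  nra.
Qed.

Lemma energy_bounded : exists A, forall t, T <= t -> energy t <= A.
Proof.
  destruct (diff_ineq_damping_rate energy energy_dot T 0 (2 * theta - 1)
              (INR K * C ^ 2 / 2) HT ltac:(lra)) as [A HA].
  - pose proof (pos_INR K). pose proof (pow2_ge_0 C). nra.
  - exact energy_derive.
  - intros t Ht. pose proof (energy_dot_le t Ht). pose proof (dissipation_ge0 t).
    assert (0 < 1 / (2 * t)) by (apply Rdiv_lt_0_compat; lra).
    replace (- (0 / t) * energy t) with 0 by (field; lra). nra.
  - exists A. intros t Ht. pose proof (HA t Ht) as HAt. rewrite Ropp_0, Rpower_O in HAt by lra.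
    lra.
Qed.

Lemma gaps_bounded_above :
  exists U, 0 <= U /\ forall t, T <= t -> forall k, (k <= n)%nat -> gap (S k) t <= U.
Proof.
  destruct energy_bounded as [A HA].
  exists (1 + 2 * Rmax A 0). split; [pose proof (Rmax_r A 0); lra|].
  intros t Ht k Hk. apply gap_le_of_energy_le; [exact Hk|].
  pose proof (HA t Ht). pose proof (Rmax_l A 0). lra.
Qed.

Lemma energy_decays : exists b A, 0 < b /\ forall t, T <= t -> energy t <= A * Rpower t (- b).
Proof.
  destruct gaps_bounded_above as [U [HU Hgap]].
  set (b := Rmin (exp (- (2 * U))) ((2 * theta - 2) / 2)).
  assert (Hb : 0 < b) by (apply Rmin_glb_lt; [apply exp_pos|lra]).
  assert (Hb_damp : b <= exp (- (2 * U))) by apply Rmin_l.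
  assert (Hb_slow : b <= (2 * theta - 2) / 2) by apply Rmin_r.
  destruct (diff_ineq_damping_rate energy energy_dot T b (2 * theta - 1)
              (INR K * C ^ 2 / 2) HT ltac:(lra)) as [A HA].
  - pose proof (pos_INR K). pose proof (pow2_ge_0 C). nra.
  - exact energy_derive.
  - intros t Ht. pose proof (energy_diff_ineq U t HU Ht (Hgap t Ht)).
    pose proof (energy_ge0 t).
    assert (b / t * energy t <= exp (- (2 * U)) / t * energy t).
    { apply Rmult_le_compat_r; [lra|]. apply Rmult_le_compat_r; [|lra].
      left. apply Rinv_0_lt_compat. lra. }
    lra.
  - exists b, A. split; assumption.
Qed.

Lemma gaps_eventually_small delta : 0 < delta <= 1 / 2 ->
  exists t1, T <= t1 /\ forall t, t1 <= t -> forall k, (k <= n)%nat -> gap (S k) t <= delta.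
Proof.
  intros Hdelta. destruct energy_decays as [b [A [Hb HA]]].
  destruct (Rpower_neg_eventually_le A b (delta ^ 2 / 16) T HT Hb ltac:(nra)) as [t1 [Ht1 Hsmall]].
  exists t1. split; [exact Ht1|]. intros t Ht k Hk.
  apply gap_le_of_energy_lt; [exact Hk|exact Hdelta|].
  pose proof (HA t ltac:(lra)). pose proof (Hsmall t Ht). nra.
Qed.

Lemma energy_sharp_decay :
  exists t1 A, T <= t1 /\ forall t, t1 <= t -> energy t <= A * Rpower t (2 - 2 * theta).
Proof.
  set (delta := (3 - 2 * theta) / 4).
  destruct (gaps_eventually_small delta ltac:(unfold delta; lra)) as [t1 [Ht1 Hgap]].
  assert (Hdamp : 2 * theta - 2 < exp (- (2 * delta))).
  { pose proof (exp_ineq1_le (- (2 * delta))). unfold delta in *. lra. }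
  destruct (diff_ineq_forcing_rate energy energy_dot t1 (exp (- (2 * delta))) (2 * theta - 1)
              (INR K * C ^ 2 / 2) ltac:(lra) ltac:(lra)) as [A HA].
  - pose proof (pos_INR K). pose proof (pow2_ge_0 C). nra.
  - intros t Ht. apply energy_derive. lra.
  - intros t Ht. apply energy_diff_ineq; [unfold delta; lra|lra|]. exact (Hgap t Ht).
  - exists t1, A. split; [exact Ht1|]. intros t Ht.
    replace (2 - 2 * theta) with (1 - (2 * theta - 1)) by ring. exact (HA t Ht).
Qed.

Lemma gaps_sharp_decay :
  exists t1 M, T <= t1 /\ 0 <= M /\
    forall t, t1 <= t -> forall k, (k <= n)%nat -> Rabs (gap (S k) t) <= M * Rpower t (- theta + 1).
Proof.
  destruct energy_sharp_decay as [t1 [A [Ht1 HA]]].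
  destruct (gaps_eventually_small (1 / 2) ltac:(lra)) as [t2 [Ht2 Hgap]].
  set (c := 8 * Rmax A 0). assert (Hc : 0 <= c) by (unfold c; pose proof (Rmax_r A 0); lra).
  exists (Rmax t1 t2), (sqrt c). split; [pose proof (Rmax_l t1 t2); lra|].
  split; [apply sqrt_pos|].
  intros t Ht k Hk. pose proof (Rmax_l t1 t2). pose proof (Rmax_r t1 t2).
  set (w := Rpower t (- theta + 1)). assert (Hw : 0 < w) by apply Rpower_gt0.
  assert (Hw2 : Rpower t (2 - 2 * theta) = w ^ 2).
  { unfold w. replace (2 - 2 * theta) with ((- theta + 1) + (- theta + 1)) by ring.
    rewrite Rpower_plus. ring. }
  assert (Hsq : gap (S k) t ^ 2 <= c * w ^ 2).
  { pose proof (gap_sq_le_energy t k Hk (Hgap t ltac:(lra) k Hk)).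
    pose proof (HA t ltac:(lra)) as HAt. rewrite Hw2 in HAt.
    pose proof (Rmax_l A 0). pose proof (pow2_ge_0 w). unfold c. nra. }
  rewrite <- (Rabs_right (sqrt c * w)) by (pose proof (sqrt_pos c); nra).
  apply Rsqr_le_abs_0. unfold Rsqr. rewrite <- (sqrt_sqrt c) in Hsq by exact Hc. nra.
Qed.

End Energy.

Theorem mainTheorem14 (K : nat) (theta T C : R) (xi r : nat -> R -> R) :
  (2 <= K)%nat ->
  1 < theta -> theta < 3 / 2 ->
  0 < T ->
  (forall (k : nat) (t : R), (1 <= k <= K)%nat -> T <= t ->
     derivable_pt_lim (xi k) t (ode_rhs K xi k t + r k t)) ->
  (forall (k : nat) (t : R), (1 <= k <= K)%nat -> T <= t ->
     continuity_pt (r k) t) ->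
  (forall (k : nat) (t : R), (1 <= k <= K)%nat -> T <= t ->
     Rabs (r k t) <= C * Rpower t (- theta)) ->
  (forall t : R, T <= t -> Rabs (xsum K xi t) <= C * Rpower t (- theta + 1)) ->
  forall k : nat, (1 <= k <= K)%nat ->
    exists (M T0 : R), forall t : R, T0 <= t ->
      Rabs (xi k t) <= M * Rpower t (- theta + 1).
Proof.
  intros HK Htheta1 Htheta2 HT Hode _ Hr Hsum k Hk.
  destruct K as [|[|n]]; [lia|lia|].
  destruct (gaps_sharp_decay n theta T C xi r HT Hode Hr Htheta1 Htheta2)
    as (t1 & M & Ht1 & HM & Hgap).
  exists (C + 2 * INR (S n) * M), t1. intros t Ht.
  set (w := Rpower t (- theta + 1)). assert (Hw : 0 < w) by apply Rpower_gt0.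
  replace ((C + 2 * INR (S n) * M) * w) with (C * w + 2 * INR (S n) * (M * w)) by ring.
  apply (abs_le_of_gaps_and_sum (fun j => xi j t) (S n)); [nra| |exact (Hsum t ltac:(lra))|exact Hk].
  intros j Hj. exact (Hgap t Ht j ltac:(lia)).
Qed.
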